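(* Let $\psi:\mathbb{R}^n\to\mathbb{R}$, $\psi(x)=u^Tx$ with $u\in\mathbb{Z}^n$. Let $F\subseteq\mathbb{R}^n$ be an $(n-1)$-dimensional lattice polytope, $v\in\mathbb{Z}^n\setminus\mathrm{aff}(F)$, $P=\mathrm{conv}(F\cup\{v\})$, and let $w$ be an outer normal vector of the facet $F$ of $P$. Assume that for every integer $i$ the maximizer $[P]_i$ is unique. Then \[ \mathrm{face}_w(\Sigma_\psi(P))=\begin{cases}\Sigma_\psi(F) & \text{if } \psi(v)\in\psi(F),\\[2pt] \Sigma_\psi(F)+\sum_{i=\max_{x\in F}\psi(x)}^{\psi(v)-1}[P]_i & \text{if } \psi(v)>\max_{x\in F}\psi(x),\\[2pt] \Sigma_\psi(F)+\sum_{i=\psi(v)}^{\min_{x\in F}\psi(x)-1}[P]_i & \text{if } \psi(v)<\min_{x\in F}\psi(x).\end{cases} \]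
   Context: For a polytope $Q$, $\mathrm{face}_w(Q)=\arg\max_{x\in Q}w^Tx$. For a lattice polytope $Q$ let $\psi_Q=\min_{x\in Q}\psi(x)$ and $\psi^Q=\max_{x\in Q}\psi(x)$ (integers). The fiber polytope is the Minkowski integral $\Sigma_\psi(Q)=\int_{\psi(Q)}(\psi^{-1}(x)\cap Q)\,dx$, which for lattice polytopes equals $\sum_{i=\psi_Q}^{\psi^Q-1}\big(\psi^{-1}(i+\tfrac12)\cap Q\big)$ (Minkowski sum). For $i\in\mathbb{Z}$, $[Q]_i:=\arg\max_{x\in Q\cap\psi^{-1}(i+\frac12)}w^Tx$. *)

From HB Require Import structures.
From mathcomp Require Import all_boot all_order all_algebra.
Set Implicit Arguments. Unset Strict Implicit. Unset Printing Implicit Defensive.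
Import Order.TTheory GRing.Theory Num.Theory.
Local Open Scope ring_scope.

Section Defs.
Variables (R : realFieldType) (n : nat).
Local Notation pt := 'rV[R]_n.

Definition pset := pt -> Prop.

Definition set_eq (A B : pset) : Prop := forall x, A x <-> B x.

Definition vecR (z : 'rV[int]_n) : pt := map_mx (fun k : int => k%:~R) z.

Definition dot (a b : pt) : R := \sum_(i < n) a 0 i * b 0 i.
Definition dotZ (a b : 'rV[int]_n) : int := \sum_(i < n) a 0 i * b 0 i.

Definition conv_seq (s : seq pt) : pset := fun x =>
  exists c : 'I_(size s) -> R,
    (forall i, 0 <= c i) /\ \sum_i c i = 1 /\ x = \sum_i c i *: s`_i.

Definition conv (A : pset) : pset := fun x =>
  exists s : seq pt, (forall y, y \in s -> A y) /\ conv_seq s x.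

Definition aff (A : pset) : pset := fun x =>
  exists s : seq pt, (forall y, y \in s -> A y) /\
  exists c : 'I_(size s) -> R, \sum_i c i = 1 /\ x = \sum_i c i *: s`_i.

Definition aff_indep (s : seq pt) : Prop :=
  forall c : 'I_(size s) -> R,
    \sum_i c i = 0 -> \sum_i c i *: s`_i = 0 -> forall i, c i = 0.

Definition affdim (A : pset) (d : nat) : Prop :=
  (exists s : seq pt, size s = d.+1 /\ (forall y, y \in s -> A y) /\ aff_indep s)
  /\ ~ (exists s : seq pt, size s = d.+2 /\ (forall y, y \in s -> A y) /\ aff_indep s).

Definition face (w : pt) (Q : pset) : pset := fun x =>
  Q x /\ forall y, Q y -> dot w y <= dot w x.

Definition msum (A B : pset) : pset := fun x =>
  exists a b, A a /\ B b /\ x = a + b.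
Definition bigmsum (l : seq pset) : pset := foldr msum (fun x => x = 0) l.

Definition slice (u : 'rV[int]_n) (Q : pset) (i : int) : pset := fun x =>
  Q x /\ dot (vecR u) x = i%:~R + 1 / 2%:R.

Definition irange (a b : int) : seq int :=
  if (a < b)%R then [seq a + (k%:Z) | k <- iota 0 `|b - a|%N] else [::].

(* sum_{i=a}^{b-1} (psi^{-1}(i+1/2) ∩ Q); with a = psi_Q, b = psi^Q this is
   the fiber polytope Sigma_psi(Q) of a lattice polytope Q *)
Definition fiber_sum (u : 'rV[int]_n) (Q : pset) (a b : int) : pset :=
  bigmsum [seq slice u Q i | i <- irange a b].

(* [Q]_i = argmax_{x in Q ∩ psi^{-1}(i+1/2)} w^T x  (as a set) *)
Definition bracket (u : 'rV[int]_n) (w : pt) (Q : pset) (i : int) : pset :=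
  face w (slice u Q i).

Definition is_min_psi (u : 'rV[int]_n) (Q : pset) (a : int) : Prop :=
  (exists x, Q x /\ dot (vecR u) x = a%:~R) /\
  forall x, Q x -> a%:~R <= dot (vecR u) x.
Definition is_max_psi (u : 'rV[int]_n) (Q : pset) (a : int) : Prop :=
  (exists x, Q x /\ dot (vecR u) x = a%:~R) /\
  forall x, Q x -> dot (vecR u) x <= a%:~R.

End Defs.

(* Faces of Minkowski sums are Minkowski sums of faces, so the w-face of the
   fiber polytope of P is the sum of the w-faces [P]_i of its slices.  Since
   F is the w-face of P, every slice of P at a level psi = i + 1/2 that F
   reaches has the corresponding slice of F as its w-face; those levels are
   exactly the ones summing to Sigma_psi(F).  Because P = conv (F u {v}), the
   psi-range of P extends that of F by the levels between psi(F) and psi(v),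
   which contribute the remaining brackets [P]_i. *)
From HB Require Import structures.
From mathcomp Require Import all_boot all_order all_algebra.
From mathcomp Require Import ring lra.
Import Order.TTheory GRing.Theory Num.Theory.
Local Open Scope ring_scope.

Set Implicit Arguments. Unset Strict Implicit.

Lemma irangeE (a b : int) : a <= b ->
  irange a b = [seq a + (k%:Z) | k <- iota 0 `|b - a|%N].
Proof. by rewrite /irange le_eqVlt => /orP[/eqP ->|->] //; rewrite ltxx subrr. Qed.

Lemma irange_cat (a b c : int) : a <= b -> b <= c ->
  irange a c = irange a b ++ irange b c.
Proof.
move=> ab bc; have ac := le_trans ab bc.
rewrite !irangeE //.
have -> : `|c - a|%N = (`|b - a| + `|c - b|)%N.
  apply/eqP; rewrite -eqz_nat PoszD !gez0_abs ?subr_ge0 //.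
  by apply/eqP; ring.
rewrite iotaD map_cat add0n; congr (_ ++ _).
rewrite -[X in iota X]addn0 iotaDl -map_comp; apply: eq_map => k /=.
by rewrite PoszD gez0_abs ?subr_ge0 //; ring.
Qed.

Lemma mem_irange (a b i : int) : i \in irange a b -> a <= i < b.
Proof.
rewrite /irange; case: ltP => // ab /mapP[k]; rewrite mem_iota add0n.
move=> /andP[_ hk] ->; rewrite lerDl /=.
have : k%:Z < `|b - a|%N by rewrite ltz_nat.
by rewrite gtz0_abs ?subr_gt0 // ltrBrDl.
Qed.

Section MinkowskiFaces.
Variables (R : realFieldType) (n : nat).
Local Notation pt := 'rV[R]_n.
Implicit Types (A B C : pset R n) (z x y : pt).

Lemma dotDr z x y : dot z (x + y) = dot z x + dot z y.
Proof. by rewrite /dot -big_split; apply: eq_bigr => i _; rewrite mxE mulrDr. Qed.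

Lemma dotZr z x c : dot z (c *: x) = c * dot z x.
Proof. by rewrite /dot mulr_sumr; apply: eq_bigr => i _; rewrite mxE mulrCA. Qed.

Lemma dot_sumr z m (f : 'I_m -> pt) : dot z (\sum_i f i) = \sum_i dot z (f i).
Proof.
rewrite /dot; under eq_bigr do rewrite summxE mulr_sumr.
by rewrite exchange_big.
Qed.

Lemma dot_vecR (a b : 'rV[int]_n) : dot (vecR R a) (vecR R b) = (dotZ a b)%:~R.
Proof.
by rewrite /dot /dotZ rmorph_sum; apply: eq_bigr => i _; rewrite !mxE rmorphM.
Qed.

Lemma set_eq_refl A : set_eq A A. Proof. by []. Qed.

Lemma set_eq_sym A B : set_eq A B -> set_eq B A.
Proof. by move=> AB x; split => /AB. Qed.

Lemma set_eq_trans A B C : set_eq A B -> set_eq B C -> set_eq A C.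
Proof. by move=> AB BC x; split => [/AB/BC|/BC/AB]. Qed.

Lemma eq_msum A A' B B' :
  set_eq A A' -> set_eq B B' -> set_eq (msum A B) (msum A' B').
Proof.
move=> AA' BB' x; split=> -[a [b [Aa [Bb ->]]]]; exists a, b.
  by split; [apply/AA' | split; first apply/BB'].
by split; [apply/AA' | split; first apply/BB'].
Qed.

Lemma msumC A B : set_eq (msum A B) (msum B A).
Proof. by move=> x; split=> -[a [b [Aa [Bb ->]]]]; exists b, a; rewrite addrC. Qed.

Lemma msumA A B C : set_eq (msum A (msum B C)) (msum (msum A B) C).
Proof.
move=> x; split.
- move=> [a [_ [Aa [[b [c [Bb [Cc ->]]]] ->]]]].
  by exists (a + b), c; rewrite addrA; split=> //; exists a, b.
- move=> [_ [c [[a [b [Aa [Bb ->]]]] [Cc ->]]]].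
  by exists a, (b + c); rewrite addrA; do 2!split=> //; exists b, c.
Qed.

Lemma msum0l A : set_eq (msum (fun x => x = 0) A) A.
Proof.
move=> x; split; first by move=> [_ [b [-> [Bb ->]]]]; rewrite add0r.
by exists 0, x; rewrite add0r.
Qed.

Lemma bigmsum_cat (l1 l2 : seq (pset R n)) :
  set_eq (bigmsum (l1 ++ l2)) (msum (bigmsum l1) (bigmsum l2)).
Proof.
elim: l1 => [|A l1 IH] /=; first exact/set_eq_sym/msum0l.
exact: set_eq_trans (eq_msum (set_eq_refl A) IH) (msumA _ _ _).
Qed.

Lemma eq_bigmsum (T : eqType) (s : seq T) (f g : T -> pset R n) :
  (forall i, i \in s -> set_eq (f i) (g i)) ->
  set_eq (bigmsum (map f s)) (bigmsum (map g s)).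
Proof.
elim: s => [|a s IH] fg //=.
by apply: eq_msum; [apply: fg; rewrite mem_head | apply: IH => i si;
  apply: fg; rewrite in_cons si orbT].
Qed.

Lemma face_msum w A B : set_eq (face w (msum A B)) (msum (face w A) (face w B)).
Proof.
move=> x; split.
- move=> [[a [b [Aa [Bb ->]]]] amax].
  exists a, b; split; [|split=> //]; split=> //.
  + move=> a' Aa'; have := amax (a' + b) ltac:(by exists a', b).
    by rewrite !dotDr lerD2r.
  + move=> b' Bb'; have := amax (a + b') ltac:(by exists a, b').
    by rewrite !dotDr lerD2l.
- move=> [a [b [[Aa amax] [[Bb bmax] ->]]]].
  split; first by exists a, b.
  by move=> _ [a' [b' [Aa' [Bb' ->]]]]; rewrite !dotDr lerD ?amax ?bmax.
Qed.

Lemma face_bigmsum w (l : seq (pset R n)) :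
  set_eq (face w (bigmsum l)) (bigmsum (map (face w) l)).
Proof.
elim: l => [|A l IH] /=; first by move=> x; split=> [[]|->] //; split=> // y ->.
exact: set_eq_trans (face_msum _ _ _) (eq_msum (set_eq_refl _) IH).
Qed.

Lemma conv_seq_convex (s : seq pt) x y (t : R) :
  conv_seq s x -> conv_seq s y -> 0 <= t <= 1 ->
  conv_seq s (t *: x + (1 - t) *: y).
Proof.
move=> [c [c0 [c1 ->]]] [d [d0 [d1 ->]]] /andP[t0 t1].
exists (fun i => t * c i + (1 - t) * d i); split.
  by move=> i; rewrite addr_ge0 // mulr_ge0 // subr_ge0.
split; first by rewrite big_split /= -!mulr_sumr c1 d1 !mulr1 addrC subrK.
by rewrite !scaler_sumr -big_split; apply: eq_bigr => i _; rewrite !scalerA scalerDl.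
Qed.

Lemma conv_sub A x : A x -> conv A x.
Proof.
move=> Ax; exists [:: x]; split; first by move=> y; rewrite inE => /eqP ->.
by exists (fun _ => 1); rewrite !big_ord1 scale1r.
Qed.

Lemma conv_dot_ge z A (lo : R) x :
  (forall y, A y -> lo <= dot z y) -> conv A x -> lo <= dot z x.
Proof.
move=> Alo [s [sA [c [c0 [c1 ->]]]]].
rewrite dot_sumr -[lo]mul1r -c1 mulr_suml; apply: ler_sum => i _.
by rewrite dotZr ler_wpM2l // Alo //; apply/sA/mem_nth.
Qed.

Lemma conv_dot_le z A (hi : R) x :
  (forall y, A y -> dot z y <= hi) -> conv A x -> dot z x <= hi.
Proof.
move=> Ahi [s [sA [c [c0 [c1 ->]]]]].
rewrite dot_sumr -[hi]mul1r -c1 mulr_suml; apply: ler_sum => i _.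
by rewrite dotZr ler_wpM2l // Ahi //; apply/sA/mem_nth.
Qed.

Variable u : 'rV[int]_n.
Local Notation psi := (dot (vecR R u)).

Lemma is_min_psi_unique A a b : is_min_psi u A a -> is_min_psi u A b -> a = b.
Proof.
move=> [[x [Ax psix]] amin] [[y [Ay psiy]] bmin].
apply/le_anti/andP; split; rewrite -(ler_int R).
- by rewrite -psiy amin.
- by rewrite -psix bmin.
Qed.

Lemma is_max_psi_unique A a b : is_max_psi u A a -> is_max_psi u A b -> a = b.
Proof.
move=> [[x [Ax psix]] amax] [[y [Ay psiy]] bmax].
apply/le_anti/andP; split; rewrite -(ler_int R).
- by rewrite -psix bmax.
- by rewrite -psiy amax.
Qed.

Lemma is_min_psi_conv_setU1 A a (v : 'rV[int]_n) : is_min_psi u A a ->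
  is_min_psi u (conv (fun x => A x \/ x = vecR R v)) (Num.min a (dotZ u v)).
Proof.
move=> [[x [Ax psix]] amin]; split.
  have [_|_] := leP a (dotZ u v).
  - by exists x; split=> //; apply: conv_sub; left.
  - by exists (vecR R v); rewrite dot_vecR; split=> //; apply: conv_sub; right.
move=> y; apply: conv_dot_ge => z [/amin|->].
  by apply: le_trans; rewrite ler_int ge_min lexx.
by rewrite dot_vecR ler_int ge_min lexx orbT.
Qed.

Lemma is_max_psi_conv_setU1 A a (v : 'rV[int]_n) : is_max_psi u A a ->
  is_max_psi u (conv (fun x => A x \/ x = vecR R v)) (Num.max a (dotZ u v)).
Proof.
move=> [[x [Ax psix]] amax]; split.
  have [_|_] := leP a (dotZ u v).
  - by exists (vecR R v); rewrite dot_vecR; split=> //; apply: conv_sub; right.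
  - by exists x; split=> //; apply: conv_sub; left.
move=> y; apply: conv_dot_le => z [/amax|->].
  by move/le_trans; apply; rewrite ler_int le_max lexx.
by rewrite dot_vecR ler_int le_max lexx orbT.
Qed.

(* Intermediate value theorem along the segment joining a psi-minimizer to a
   psi-maximizer. *)
Lemma conv_seq_slice_nonempty (s : seq pt) a b i :
  is_min_psi u (conv_seq s) a -> is_max_psi u (conv_seq s) b ->
  a <= i < b -> exists y, slice u (conv_seq s) i y.
Proof.
move=> [[xm [sxm psixm]] _] [[xM [sxM psixM]] _] /andP[ai ib].
have ab : (a%:~R : R) < b%:~R by rewrite ltr_int (le_lt_trans ai ib).
have ai' : (a%:~R : R) <= i%:~R by rewrite ler_int.
have ib' : (i%:~R : R) + 1 <= b%:~R by rewrite -(intrD _ i 1) ler_int lezD1.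
pose t := (i%:~R + 1 / 2%:R - a%:~R) / (b%:~R - a%:~R) : R.
have ba0 : (0 : R) < b%:~R - a%:~R by rewrite subr_gt0.
have t01 : 0 <= t <= 1.
  by rewrite divr_ge0 ?ler_pdivrMr /=; lra.
exists (t *: xM + (1 - t) *: xm); split; first exact: conv_seq_convex.
rewrite dotDr !dotZr psixM psixm /t; field.
by rewrite lt0r_neq0.
Qed.

Variable w : pt.

Lemma face_bigmsum_slice (P : pset R n) (l : seq int) :
  set_eq (face w (bigmsum (map (slice u P) l))) (bigmsum (map (bracket u w P) l)).
Proof. by apply: set_eq_trans (face_bigmsum _ _) _; rewrite -map_comp. Qed.

Lemma bracket_face (P F : pset R n) i : set_eq (face w P) F ->
  (exists y, slice u F i y) -> set_eq (bracket u w P i) (slice u F i).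
Proof.
move=> PF [y [Fy psiy]] x; split.
- move=> [[Px psix] xmax]; split=> //.
  have [Py ymax] := proj2 (PF y) Fy.
  apply/PF; split=> // z Pz.
  by apply: le_trans (ymax _ Pz) (xmax _ _).
- by move=> [/PF[Px xmax] psix]; split=> // z [Pz _]; apply: xmax.
Qed.

Lemma bigmsum_bracket_face (P F : pset R n) (l : seq int) : set_eq (face w P) F ->
  (forall i, i \in l -> exists y, slice u F i y) ->
  set_eq (bigmsum (map (bracket u w P) l)) (bigmsum (map (slice u F) l)).
Proof. by move=> PF Fl; apply: eq_bigmsum => i /Fl; apply: bracket_face. Qed.

End MinkowskiFaces.

Theorem theorem4p8 (R : realFieldType) (n : nat)
    (u : 'rV[int]_n) (SF : seq 'rV[int]_n) (v : 'rV[int]_n) (w : 'rV[R]_n)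
    (mF MF mP MP : int) :
  (0 < n)%N ->
  let F := conv_seq (map (@vecR R n) SF) in
  let P := conv (fun x => F x \/ x = vecR R v) in
  affdim F n.-1 ->
  ~ aff F (vecR R v) ->
  w != 0 ->
  set_eq (face w P) F ->
  (forall (i : int) (x y : 'rV[R]_n),
      bracket u w P i x -> bracket u w P i y -> x = y) ->
  is_min_psi u F mF -> is_max_psi u F MF ->
  is_min_psi u P mP -> is_max_psi u P MP ->
  [/\ (exists x, F x /\ dot (vecR R u) x = dot (vecR R u) (vecR R v)) ->
        set_eq (face w (fiber_sum u P mP MP)) (fiber_sum u F mF MF),
      (MF < dotZ u v) ->
        set_eq (face w (fiber_sum u P mP MP))
          (msum (fiber_sum u F mF MF)
                (bigmsum [seq bracket u w P i | i <- irange MF (dotZ u v)]))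
    & (dotZ u v < mF) ->
        set_eq (face w (fiber_sum u P mP MP))
          (msum (fiber_sum u F mF MF)
                (bigmsum [seq bracket u w P i | i <- irange (dotZ u v) mF]))].
Proof.
move=> _ F P _ _ _ PF _ minF maxF minP maxP.
have -> := is_min_psi_unique minP (is_min_psi_conv_setU1 v minF).
have -> := is_max_psi_unique maxP (is_max_psi_conv_setU1 v maxF).
have mMF : mF <= MF.
  have [[x [Fx psix]] _] := maxF.
  by rewrite -(ler_int R) -psix (proj2 minF).
have sliceF i : i \in irange mF MF -> exists y, slice u F i y.
  by move=> /mem_irange; apply: conv_seq_slice_nonempty.
have faceF l : (forall i, i \in l -> exists y, slice u F i y) ->
    set_eq (face w (bigmsum (map (slice u P) l))) (bigmsum (map (slice u F) l)).
  by move=> Fl; exact: set_eq_trans (face_bigmsum_slice _ _ _ _)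
    (bigmsum_bracket_face PF Fl).
split=> [[x [Fx psix]]|vMF|vmF].
- have /andP[mFv vMF] : mF <= dotZ u v <= MF.
  by rewrite -!(ler_int R) -dot_vecR -psix (proj2 minF) // (proj2 maxF).
  by rewrite (min_idPl mFv) (max_idPl vMF); exact: faceF.
- rewrite (min_idPl (le_trans mMF (ltW vMF))) (max_idPr (ltW vMF)).
  rewrite /fiber_sum (irange_cat mMF (ltW vMF)).
  apply: set_eq_trans (face_bigmsum_slice _ _ _ _) _; rewrite map_cat.
  apply: set_eq_trans (bigmsum_cat _ _) (eq_msum _ (set_eq_refl _)).
  exact: bigmsum_bracket_face.
- rewrite (min_idPr (ltW vmF)) (max_idPl (le_trans (ltW vmF) mMF)).
  rewrite /fiber_sum (irange_cat (ltW vmF) mMF).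
  apply: set_eq_trans (face_bigmsum_slice _ _ _ _) _; rewrite map_cat.
  apply: set_eq_trans (bigmsum_cat _ _) (set_eq_trans _ (msumC _ _)).
  exact/eq_msum/bigmsum_bracket_face.
Qed.
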